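(* Let $C:\mathbb{R}^n\to\mathbb{R}$ be convex, increasing and $\mathbf 1$-invariant with $C(\vec 0)>0$. Then for every $\vec q\in\mathbb{R}^n_{>0}$ there exists a unique $\alpha>0$ with $C(-\vec q/\alpha)=0$; hence $\varphi:\mathbb{R}^n_{>0}\to\mathbb{R}$, $\varphi(\vec q)=$ this $\alpha$, is well-defined.
   Context: $\mathbf 1=(1,\dots,1)$. $C$ is $\mathbf 1$-invariant if $C(\vec q+\alpha\mathbf 1)=C(\vec q)+\alpha$ for all $\vec q,\alpha$; increasing if $C(\vec q)>C(\vec q')$ whenever $\vec q\succeq\vec q'$ coordinatewise and $\vec q\neq\vec q'$. $\mathbb{R}^n_{>0}$ is the set of vectors with all coordinates strictly positive. *)

From mathcomp Require Import all_boot all_order all_algebra.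
From mathcomp Require Import reals.
Set Implicit Arguments. Unset Strict Implicit. Unset Printing Implicit Defensive.
Import Order.TTheory GRing.Theory Num.Theory.
Local Open Scope ring_scope.

Definition ones (R : realType) (n : nat) : 'rV[R]_n := const_mx 1.

Definition convex_fun (R : realType) (n : nat) (C : 'rV[R]_n -> R) : Prop :=
  forall (x y : 'rV[R]_n) (t : R), 0 <= t -> t <= 1 ->
    C (t *: x + (1 - t) *: y) <= t * C x + (1 - t) * C y.

Definition one_invariant (R : realType) (n : nat) (C : 'rV[R]_n -> R) : Prop :=
  forall (q : 'rV[R]_n) (a : R), C (q + a *: ones R n) = C q + a.

Definition vge (R : realType) (n : nat) (q q' : 'rV[R]_n) : Prop :=
  forall i : 'I_n, q' 0 i <= q 0 i.

Definition increasing (R : realType) (n : nat) (C : 'rV[R]_n -> R) : Prop :=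
  forall q q' : 'rV[R]_n, vge q q' -> q <> q' -> C q' < C q.

Definition pos_vec (R : realType) (n : nat) (q : 'rV[R]_n) : Prop :=
  forall i : 'I_n, 0 < q 0 i.

From mathcomp Require Import all_boot all_order all_algebra.
From mathcomp Require Import reals.
From mathcomp Require Import topology normedtype.
From mathcomp Require Import lra.
Import Order.TTheory GRing.Theory Num.Theory.
Import numFieldNormedType.Exports.
Local Open Scope ring_scope.

(* If m <= q_i <= M with m > 0, these give, for t <= s and g t := C (- t q),
   (s - t) m <= g t - g s <= (s - t) M.  So g is continuous and strictly
   decreasing with g 0 = C 0 > 0 and g (C 0 / m) <= 0; it therefore has exactly
   one zero t > 0, and alpha = 1 / t. *)

Section BoundedSlope.
Context {R : realType} {f : R -> R} {m M : R}.
Hypothesis m_gt0 : 0 < m.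
Hypothesis f_slope :
  forall {t s}, t <= s -> (s - t) * m <= f t - f s <= (s - t) * M.

Lemma bounded_slope_decreasing : {homo f : t s /~ t < s}.
Proof.
move=> s t lt_ts; have /andP[+ _] := f_slope (ltW lt_ts).
have : 0 < (s - t) * m by rewrite mulr_gt0 // subr_gt0.
lra.
Qed.

Lemma bounded_slope_dist t s : `|f t - f s| <= `|t - s| * M.
Proof.
wlog le_ts : t s / t <= s.
  move=> le_dist; case: (leP t s) => [|/ltW]; first exact: le_dist.
  by move=> /le_dist; rewrite distrC [`|s - t|]distrC.
have /andP[slope_ge slope_le] := f_slope le_ts.
have fts_ge0 : 0 <= f t - f s.
  by apply: le_trans slope_ge; rewrite mulr_ge0 ?subr_ge0 // ltW.
by rewrite [`|t - s|]distrC (ger0_norm fts_ge0) ger0_norm ?subr_ge0.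
Qed.

Lemma bounded_slope_continuous : continuous f.
Proof.
have M_gt0 : 0 < M.
  have /andP[lo hi] := @f_slope 0 1 ler01; rewrite subr0 !mul1r in lo hi.
  exact: lt_le_trans m_gt0 (le_trans lo hi).
move=> x; apply/cvgrPdist_le => e e_gt0; near=> y.
apply: le_trans (bounded_slope_dist x y) _; rewrite -ler_pdivlMr //.
near: y; apply: cvgr_dist_le; [exact: cvg_id | exact: divr_gt0].
Unshelve. all: by end_near.
Qed.

Lemma bounded_slope_root : 0 < f 0 -> exists2 t, 0 < t & f t = 0.
Proof.
move=> f0_gt0; set b := f 0 / m.
have b_ge0 : 0 <= b by rewrite divr_ge0 // ltW.
have fb_le0 : f b <= 0.
  have /andP[+ _] := f_slope b_ge0.
  by rewrite subr0 /b divfK ?gt_eqF //; lra.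
have [t t_in ft0] : exists2 t, t \in `[0, b] & f t = 0.
  apply: IVT => //; first exact/continuous_subspaceT/bounded_slope_continuous.
  by rewrite ge_min le_max fb_le0 (ltW f0_gt0) orbT.
exists t => //; rewrite lt_def (itvP t_in) andbT.
have : f t < f 0 by rewrite ft0.
by apply: contraTneq => ->; rewrite ltxx.
Qed.

End BoundedSlope.

Lemma pos_vec_bounds {R : realType} {n : nat} {q : 'rV[R]_n} :
  pos_vec q -> exists m M, 0 < m /\ forall i, m <= q 0 i <= M.
Proof.
move=> q_pos; exists (\big[Num.min/1]_i q 0 i), (\big[Num.max/1]_i q 0 i).
split=> [|i]; last by rewrite bigmin_le le_bigmax.
by apply/bigmin_gtP; split=> // i _; exact: q_pos.
Qed.

Section OneInvariant.
Context {R : realType} {n : nat} {C : 'rV[R]_n -> R}.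
Hypothesis C_incr : increasing C.
Hypothesis C_inv : one_invariant C.

Lemma increasing_le (x y : 'rV[R]_n) : vge x y -> C y <= C x.
Proof.
move=> ge_xy; have [-> //|/eqP ne_xy] := eqVneq x y.
exact/ltW/C_incr.
Qed.

Lemma one_invariant_shift_le (x y : 'rV[R]_n) (a : R) :
  (forall i, y 0 i + a <= x 0 i) -> C y + a <= C x.
Proof.
move=> le_yx; rewrite -C_inv; apply: increasing_le => i.
by rewrite !mxE mulr1.
Qed.

Lemma one_invariant_ray_slope {q : 'rV[R]_n} {m M : R} :
  (forall i, m <= q 0 i <= M) -> forall t s, t <= s ->
  (s - t) * m <= C (- (t *: q)) - C (- (s *: q)) <= (s - t) * M.
Proof.
move=> q_bd t s le_ts; have st_ge0 : 0 <= s - t by rewrite subr_ge0.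
apply/andP; split.
- suff : C (- (s *: q)) + (s - t) * m <= C (- (t *: q)) by lra.
  apply: one_invariant_shift_le => i; rewrite !mxE.
  have /andP[m_le _] := q_bd i; have := ler_wpM2l st_ge0 m_le.
  rewrite mulrBl; lra.
- suff : C (- (t *: q)) + - ((s - t) * M) <= C (- (s *: q)) by lra.
  apply: one_invariant_shift_le => i; rewrite !mxE.
  have /andP[_ le_M] := q_bd i; have := ler_wpM2l st_ge0 le_M.
  rewrite mulrBl; lra.
Qed.

End OneInvariant.

Theorem lemma4p3 (R : realType) (n : nat) (C : 'rV[R]_n -> R) :
  convex_fun C -> increasing C -> one_invariant C -> 0 < C 0 ->
  forall q : 'rV[R]_n, pos_vec q ->
    exists! alpha : R, 0 < alpha /\ C (- (alpha^-1 *: q)) = 0.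
Proof.
move=> _ C_incr C_inv C0_gt0 q q_pos.
have [m [M [m_gt0 q_bd]]] := pos_vec_bounds q_pos.
pose g t := C (- (t *: q)).
have g_slope := one_invariant_ray_slope C_incr C_inv q_bd.
have g0_gt0 : 0 < g 0 by rewrite /g scale0r oppr0.
have [t t_gt0 gt_eq0] := bounded_slope_root (f := g) m_gt0 g_slope g0_gt0.
exists t^-1; split; first by rewrite invr_gt0 invrK.
move=> a [_ ga_eq0]; rewrite -[a]invrK; congr (_^-1).
apply: (dec_inj (le_nmono (bounded_slope_decreasing m_gt0 g_slope))).
exact: etrans gt_eq0 (esym ga_eq0).
Qed.
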